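(* Let $m\in\mathbb{N}$ and $\mathbb{E}_m=\mathbb{E}^{\otimes_{\mathbb{R}}m}$. There exists an ordering $Q_m$ on the ring $\mathbb{E}_m$ (i.e. $\mathbb{E}_m=Q_m\sqcup\{0\}\sqcup(-Q_m)$, $Q_m+Q_m\subset Q_m$, $Q_mQ_m\subset Q_m$) such that $Q^{\otimes_{\mathbb{R}}m}\subseteq Q_m$, i.e. every simple tensor $u_1\otimes\cdots\otimes u_m$ with all $u_i\in Q$ lies in $Q_m$.
   Context: $\mathbb{E}=\bigcup_{n\geq1}\mathbb{R}((t^{1/n}))$ is the field of Puiseux series over $\mathbb{R}$. For $f\in\mathbb{E}\setminus\{0\}$ let $\mathfrak{c}(f)$ be the coefficient of its nonzero term of smallest $t$-exponent, and $Q=\{f\in\mathbb{E}:\mathfrak{c}(f)>0\}$ (an ordering of $\mathbb{E}$). Tensor products are over $\mathbb{R}$. *)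

From HB Require Import structures.
From mathcomp Require Import all_boot all_order all_algebra.
From mathcomp Require Import boolp classical_sets functions cardinality fsbigop.
From mathcomp Require Import reals.
Set Implicit Arguments. Unset Strict Implicit. Unset Printing Implicit Defensive.
Import Order.TTheory GRing.Theory Num.Theory.
Local Open Scope classical_set_scope.
Local Open Scope ring_scope.

(* Puiseux series over R: a series  sum_q f(q) t^q  is represented by its *)
(* coefficient function f : rat -> R.  It is a Puiseux series iff there   *)
(* are n >= 1 and N : int with  f q <> 0 -> q = k/n for some integer k>=N *)
(* (i.e. f lies in R((t^{1/n}))).                                         *)
Section Puiseux.
Variable R : realType.

Definition is_puiseux (f : rat -> R) : Prop :=
  exists n : nat, (0 < n)%N /\
    exists N : int, forall q : rat, f q != 0 ->
      exists k : int, q = k%:~R / n%:R /\ N <= k.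

Definition ps_zero : rat -> R := fun _ => 0.
Definition ps_one : rat -> R := fun q => if q == 0 then 1 else 0.
Definition ps_add (f g : rat -> R) : rat -> R := fun q => f q + g q.
Definition ps_opp (f : rat -> R) : rat -> R := fun q => - f q.
Definition ps_scale (a : R) (f : rat -> R) : rat -> R := fun q => a * f q.
(* Cauchy product; for Puiseux series the sum has finite support. *)
Definition ps_mul (f g : rat -> R) : rat -> R :=
  fun q => \sum_(a \in [set: rat]) (f a * g (q - a)).

Definition posQ (f : rat -> R) : Prop :=
  exists q : rat, 0 < f q /\ forall r : rat, r < q -> f r = 0.

End Puiseux.

(* The m-fold tensor power E^{(x)m} over R, as an R-algebra, given by its *)
(* universal property: a commutative R-algebra T with a map               *)
(* iota : E^m -> T,  (u_1,..,u_m) |-> u_1 (x) ... (x) u_m, which is       *)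
(* R-multilinear, multiplicative, sends (1,..,1) to 1, and is universal   *)
(* among R-multilinear maps from E^m into R-modules.                      *)
Definition tuple_upd (R : realType) (m : nat) (u : 'I_m -> rat -> R)
  (i : 'I_m) (f : rat -> R) : 'I_m -> rat -> R :=
  fun j => if j == i then f else u j.

Definition all_puiseux (R : realType) (m : nat) (u : 'I_m -> rat -> R) : Prop :=
  forall i, is_puiseux (u i).

Definition multilinear (R : realType) (m : nat) (W : lmodType R)
  (phi : ('I_m -> rat -> R) -> W) : Prop :=
  forall (u : 'I_m -> rat -> R) (i : 'I_m) (f g : rat -> R) (a : R),
    all_puiseux u -> is_puiseux f -> is_puiseux g ->
    phi (tuple_upd u i (ps_add (ps_scale a f) g))
      = a *: phi (tuple_upd u i f) + phi (tuple_upd u i g).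

Definition is_tensor_power (R : realType) (m : nat) (T : comAlgType R)
  (iota : ('I_m -> rat -> R) -> T) : Prop :=
  [/\ multilinear iota,
      (forall u v : 'I_m -> rat -> R, all_puiseux u -> all_puiseux v ->
         iota (fun j => ps_mul (u j) (v j)) = iota u * iota v),
      iota (fun _ => ps_one R) = 1 &
      (forall (W : lmodType R) (phi : ('I_m -> rat -> R) -> W),
         multilinear phi ->
         (exists g : {linear T -> W},
            forall u, all_puiseux u -> g (iota u) = phi u) /\
         (forall g1 g2 : {linear T -> W},
            (forall u, all_puiseux u -> g1 (iota u) = g2 (iota u)) ->
            forall x, g1 x = g2 x))].

Definition is_ordering (T : comRingType) (P : T -> Prop) : Prop :=
  [/\ (forall x : T, P x \/ x = 0 \/ P (- x)),
      (forall x : T, ~ (P x /\ x = 0)),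
      (forall x : T, ~ (P x /\ P (- x))),
      (forall x y : T, P x -> P y -> P (x + y)) &
      (forall x y : T, P x -> P y -> P (x * y))].

From HB Require Import structures.
From mathcomp Require Import all_boot all_order all_algebra.
From mathcomp Require Import boolp classical_sets functions fsbigop reals.
From mathcomp Require Import ring.
Set Implicit Arguments. Unset Strict Implicit. Unset Printing Implicit Defensive.
Import Order.TTheory GRing.Theory Num.Theory.
Local Open Scope ring_scope.

(* A tensor [x] is sent to its coefficient function [g x : Q^m -> R], where
   [g (u_1 (x) ... (x) u_m) q = u_1 (q_1) * ... * u_m (q_m)], and is declared
   positive when the coefficient of the lexicographically least exponent of
   [g x] is positive.  Every [x] is a finite sum of simple tensors; writing all
   the series involved in a reduced echelon basis [b_1, ..., b_d] with pairwise
   distinct leading exponents [o_j] gives [x = sum_J E_J b_(J 1) (x) ... (x) b_(J m)].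
   The basic tensors have pairwise distinct leading exponents [(o_(J i))_i], so
   the leading term of [g x] is that of the lex-least [J] with [E_J <> 0]: it
   vanishes only when [x = 0], which gives trichotomy.  Leading exponents add
   under the Cauchy product, so the leading coefficient of [g (x * y)] is the
   product of those of [g x] and [g y]. *)

Section PuiseuxSeries.
Variable R : realType.
Local Notation F := (rat -> R).
Implicit Types f g : F.

Lemma frac_expand (n n' : nat) (k : int) : (0 < n)%N -> (0 < n')%N ->
  k%:~R / n%:R = (k * n'%:Z)%:~R / (n * n')%:R :> rat.
Proof.
move=> n_gt0 n'_gt0; rewrite intrM natrM invfM.
have n_neq0 : (n%:R : rat) != 0 by rewrite pnatr_eq0 -lt0n.
have n'_neq0 : (n'%:R : rat) != 0 by rewrite pnatr_eq0 -lt0n.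
by field; rewrite n_neq0 n'_neq0.
Qed.

Lemma puiseux0 : is_puiseux (0 : F).
Proof. by exists 1%N; split => //; exists 0 => q; rewrite eqxx. Qed.

Lemma puiseux1 : is_puiseux (ps_one R).
Proof.
exists 1%N; split => //; exists 0 => q.
have [-> _|q_neq0] := eqVneq q 0; first by exists 0; rewrite mul0r.
by rewrite /ps_one (negPf q_neq0) eqxx.
Qed.

Lemma puiseuxD f g : is_puiseux f -> is_puiseux g -> is_puiseux (f + g).
Proof.
move=> [n [n_gt0 [N fN]]] [n' [n'_gt0 [N' gN']]].
exists (n * n')%N; split; first by rewrite muln_gt0 n_gt0.
exists (Num.min (N * n'%:Z) (N' * n%:Z)) => q.
have -> : (f + g) q = f q + g q by [].
have [fq0|fq_neq0 _] := eqVneq (f q) 0.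
  rewrite fq0 add0r => /gN' [k [-> N'k]]; exists (k * n%:Z); split.
    by rewrite mulnC -frac_expand.
  by rewrite ge_min ler_pM2r ?ltz_nat // N'k orbT.
have [k [-> Nk]] := fN q fq_neq0; exists (k * n'%:Z); split; first exact: frac_expand.
by rewrite ge_min ler_pM2r ?ltz_nat // Nk.
Qed.

Lemma puiseuxZ a f : is_puiseux f -> is_puiseux (ps_scale a f).
Proof.
move=> [n [n_gt0 [N fN]]]; exists n; split => //; exists N => q.
by rewrite /ps_scale mulf_eq0 negb_or => /andP[_ /fN].
Qed.

Lemma puiseuxN f : is_puiseux f -> is_puiseux (- f).
Proof.
move=> [n [n_gt0 [N fN]]]; exists n; split => //; exists N => q.
by rewrite /= oppr_eq0 => /fN.
Qed.

Lemma puiseuxB f g : is_puiseux f -> is_puiseux g -> is_puiseux (f - g).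
Proof. by move=> pf pg; apply: puiseuxD => //; apply: puiseuxN. Qed.

Lemma puiseux_sum (I : Type) (r : seq I) (P : pred I) (fs : I -> F) :
  (forall i, P i -> is_puiseux (fs i)) -> is_puiseux (\sum_(i <- r | P i) fs i).
Proof. by move=> pfs; apply: big_ind => //; [exact: puiseux0|exact: puiseuxD]. Qed.

Lemma ps_mul_neq0 f g q : ps_mul f g q != 0 -> exists a, f a != 0 /\ g (q - a) != 0.
Proof.
move=> fg_neq0; apply/not_existsP => none; move/eqP: fg_neq0; apply.
apply: fsbig1 => a _; apply/eqP; rewrite mulf_eq0; apply/negPn/negP.
by rewrite negb_or => /andP[fa ga]; apply: (none a).
Qed.

Lemma puiseuxM f g : is_puiseux f -> is_puiseux g -> is_puiseux (ps_mul f g).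
Proof.
move=> [n [n_gt0 [N fN]]] [n' [n'_gt0 [N' gN']]].
exists (n * n')%N; split; first by rewrite muln_gt0 n_gt0.
exists (N * n'%:Z + N' * n%:Z) => q /ps_mul_neq0 [a [/fN [k [ea Nk]] /gN' [k' [eb N'k']]]].
exists (k * n'%:Z + k' * n%:Z); split; last by rewrite lerD // ler_pM2r ?ltz_nat.
rewrite -[q](subrK a) eb ea intrD mulrDl -frac_expand // [(n * n')%N]mulnC.
by rewrite -frac_expand // addrC.
Qed.

Definition ps_lead f (p : rat) := f p != 0 /\ forall r, r < p -> f r = 0.

(* The exponents of [f] lie in [(N + s) / n], [s : nat]; take the least [s]. *)
Lemma ps_lead_exists f : is_puiseux f -> f != 0 -> exists p, ps_lead f p.
Proof.
move=> [n [n_gt0 [N fN]]] f_neq0.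
have n_gt0' : (0 : rat) < n%:R by rewrite ltr0n.
pose P s := f ((N + s%:Z)%:~R / n%:R) != 0.
have exP : exists s, P s.
  have [q fq] : exists q, f q != 0.
    apply/not_existsP => none; move/eqP: f_neq0; apply; apply/funext => q.
    by apply/eqP/negPn/negP; apply: none.
  have [k [ek Nk]] := fN q fq; exists (absz (k - N)).
  by rewrite /P gez0_abs ?subr_ge0 // (addrC N) subrK -ek.
have [s Ps min_s] := ex_minnP exP.
exists ((N + s%:Z)%:~R / n%:R); split => // r lt_r.
apply/eqP/negP => /negP fr; have [k [ek Nk]] := fN r fr.
have : (s <= absz (k - N))%N.
  by apply: min_s; rewrite /P gez0_abs ?subr_ge0 // (addrC N) subrK -ek.
move: lt_r; rewrite ek ltr_pM2r ?invr_gt0 // ltr_int => lt_k.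
by rewrite -lez_nat gez0_abs ?subr_ge0 // lerBrDl leNgt lt_k.
Qed.

Lemma ps_mul_single f g q a :
  (forall x, x != a -> f x * g (q - x) = 0) -> ps_mul f g q = f a * g (q - a).
Proof.
move=> f0; rewrite /ps_mul -(fsbig_widen [set a] [set: rat]) ?fsbig_set1 //.
by move=> x [_ /eqP /f0].
Qed.

Lemma ps_mul1r f : ps_mul (ps_one R) f = f.
Proof.
apply/funext => q; rewrite (ps_mul_single (a := 0)) => [|x /negPf x_neq0].
  by rewrite /ps_one eqxx mul1r subr0.
by rewrite /ps_one x_neq0 mul0r.
Qed.

Lemma ps_mulr1 f : ps_mul f (ps_one R) = f.
Proof.
apply/funext => q; rewrite (ps_mul_single (a := q)) => [|x x_neq_q].
  by rewrite /ps_one subrr eqxx mulr1.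
by rewrite /ps_one subr_eq0 eq_sym (negPf x_neq_q) mulr0.
Qed.

Section ProductLead.
Variables (f g : F) (a b : rat).
Hypotheses (f_below : forall r, r < a -> f r = 0) (g_below : forall r, r < b -> g r = 0).

Lemma ps_mul_below r : r < a + b -> ps_mul f g r = 0.
Proof.
move=> r_lt; apply: fsbig1 => x _.
have [x_lt|a_le] := ltP x a; first by rewrite f_below ?mul0r.
by rewrite g_below ?mulr0 // ltrBlDr (lt_le_trans r_lt) // addrC lerD2l.
Qed.

Lemma ps_mul_lead : ps_mul f g (a + b) = f a * g b.
Proof.
rewrite (ps_mul_single (a := a)) ?[a + b]addrC ?addrK // => x.
case: ltgtP => // [x_lt|a_lt] _; first by rewrite f_below ?mul0r.
by rewrite g_below ?mulr0 // ltrBlDr ltrD2l.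
Qed.

End ProductLead.

End PuiseuxSeries.

Section ReducedEchelon.
Variable R : realType.
Local Notation F := (rat -> R).
Implicit Types (bs : seq F) (os : seq rat) (f g : F).

Definition comb bs (a : nat -> R) : F := \sum_(k < size bs) ps_scale (a k) bs`_k.

Definition in_span bs f := exists a, f = comb bs a.

Definition reduced_echelon bs os := size os = size bs /\
  forall k, (k < size bs)%N -> [/\ is_puiseux bs`_k,
    forall r, r < os`_k -> bs`_k r = 0 &
    forall l, (l < size bs)%N -> bs`_k os`_l = (k == l)%:R].

Lemma combE bs a q : comb bs a q = \sum_(k < size bs) a k * bs`_k q.
Proof. by rewrite /comb fct_sumE. Qed.

Lemma in_span0 bs : in_span bs 0.
Proof.
exists (fun _ => 0); apply/funext => q.
by rewrite combE big1 // => k _; rewrite mul0r.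
Qed.

Lemma in_spanD bs f g : in_span bs f -> in_span bs g -> in_span bs (f + g).
Proof.
move=> [a ->] [a' ->]; exists (fun k => a k + a' k); apply/funext => q.
rewrite -[LHS]/(comb bs a q + comb bs a' q) !combE -big_split.
by apply: eq_bigr => k _; rewrite mulrDl.
Qed.

Lemma in_spanZ bs c f : in_span bs f -> in_span bs (ps_scale c f).
Proof.
move=> [a ->]; exists (fun k => c * a k); apply/funext => q.
by rewrite /ps_scale !combE mulr_sumr; apply: eq_bigr => k _; rewrite mulrA.
Qed.

Lemma in_span_nth bs k : (k < size bs)%N -> in_span bs bs`_k.
Proof.
move=> k_lt; exists (fun l => (l == k)%:R); apply/funext => q.
rewrite combE (bigD1 (Ordinal k_lt)) //= eqxx mul1r big1 ?addr0 // => l.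
by rewrite -val_eqE /= => /negPf ->; rewrite mul0r.
Qed.

Lemma in_span_comb bs bs' a :
  (forall k, (k < size bs)%N -> in_span bs' bs`_k) -> in_span bs' (comb bs a).
Proof.
move=> bs_in; apply: big_ind => [|f g|k _]; [exact: in_span0|exact: in_spanD|].
exact/in_spanZ/bs_in.
Qed.

Lemma comb_coord bs os a l : reduced_echelon bs os -> (l < size bs)%N ->
  comb bs a os`_l = a l.
Proof.
move=> [_ bsP] l_lt; rewrite combE (bigD1 (Ordinal l_lt)) //=.
have [_ _ ->] := bsP l l_lt; rewrite // eqxx mulr1 big1 ?addr0 // => k.
rewrite -val_eqE /= => /negPf k_neq_l; have [_ _ ->] := bsP k (ltn_ord k) => //.
by rewrite k_neq_l mulr0.
Qed.

Lemma reduced_echelon_rcons bs os h p : reduced_echelon bs os -> is_puiseux h ->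
  h p = 1 -> (forall r, r < p -> h r = 0) -> (forall l, (l < size bs)%N -> h os`_l = 0) ->
  reduced_echelon (rcons [seq b - ps_scale (b p) h | b <- bs] h) (rcons os p).
Proof.
move=> [size_os bsP] ph hp1 h_below h_os.
have os_neq_p l : (l < size bs)%N -> os`_l != p.
  by move=> /h_os; apply: contra_eq_neq => ->; rewrite hp1 oner_neq0.
have nth_os l :
    (rcons os p)`_l = if (l < size bs)%N then os`_l else if l == size bs then p else 0.
  by rewrite nth_rcons size_os.
split; first by rewrite !size_rcons size_map size_os.
rewrite size_rcons size_map => k; rewrite ltnS leq_eqVlt => /orP[/eqP ->|k_lt].
  rewrite nth_rcons size_map ltnn eqxx nth_os ltnn eqxx; split => // l.
  rewrite ltnS leq_eqVlt nth_os => /orP[/eqP ->|l_lt]; first by rewrite ltnn !eqxx hp1.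
  by rewrite l_lt h_os // gtn_eqF.
rewrite nth_rcons size_map k_lt (nth_map 0) // nth_os k_lt.
have [pb b_below b_os] := bsP k k_lt; split.
- by apply: puiseuxB => //; apply: puiseuxZ.
- move=> r r_lt; rewrite -[LHS]/(bs`_k r - bs`_k p * h r) b_below // sub0r.
  apply/eqP; rewrite oppr_eq0 mulf_eq0.
  case: eqP => //= /eqP bp_neq0.
  have os_lt_p : os`_k < p.
    by rewrite lt_neqAle os_neq_p // leNgt; apply: contra bp_neq0 => /b_below ->.
  by rewrite h_below ?eqxx ?orbT // (lt_trans r_lt).
- move=> l; rewrite ltnS leq_eqVlt nth_os => /orP[/eqP ->|l_lt].
    rewrite ltnn eqxx -[LHS]/(bs`_k p - bs`_k p * h p) hp1 mulr1 subrr.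
    by rewrite ltn_eqF.
  rewrite l_lt -[LHS]/(bs`_k os`_l - bs`_k p * h os`_l) h_os // mulr0 subr0.
  exact: b_os.
Qed.

(* The remainder [h] of [f] after subtracting its coordinates [f os`_k] vanishes
   at every [os`_l]; if [h != 0], its leading exponent is therefore new. *)
Lemma reduced_echelon_extend bs os f : reduced_echelon bs os -> is_puiseux f ->
  exists bs' os', [/\ reduced_echelon bs' os', in_span bs' f &
    forall g, in_span bs g -> in_span bs' g].
Proof.
move=> echelon_bs pf; have [size_os bsP] := echelon_bs.
pose h := f - comb bs (fun k => f os`_k).
have ph : is_puiseux h.
  apply: puiseuxB => //; apply: puiseux_sum => k _; apply: puiseuxZ.
  by have [] := bsP k (ltn_ord k).
have h_os l : (l < size bs)%N -> h os`_l = 0.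
  by move=> l_lt; rewrite -[LHS]/(f os`_l - comb bs _ os`_l) comb_coord // subrr.
have [h0|h_neq0] := eqVneq h 0.
  exists bs, os; split => //; exists (fun k => f os`_k).
  by apply/eqP; rewrite -subr_eq0 -/h h0.
have [p [hp_neq0 h_below]] := ps_lead_exists ph h_neq0.
pose b := ps_scale (h p)^-1 h.
have b_os l : (l < size bs)%N -> b os`_l = 0.
  by move=> /h_os; rewrite /b /ps_scale => ->; rewrite mulr0.
have b_below r : r < p -> b r = 0.
  by move=> /h_below; rewrite /b /ps_scale => ->; rewrite mulr0.
have echelon_bs' :=
  reduced_echelon_rcons echelon_bs (puiseuxZ _ ph) (mulVf hp_neq0) b_below b_os.
pose bs' := rcons [seq c - ps_scale (c p) b | c <- bs] b.
have b_in : in_span bs' b.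
  have := @in_span_nth bs' (size bs); rewrite size_rcons size_map ltnSn nth_rcons.
  by rewrite size_map ltnn eqxx; apply.
have bs_in k : (k < size bs)%N -> in_span bs' bs`_k.
  move=> k_lt; have -> : bs`_k = bs'`_k + ps_scale (bs`_k p) b.
    by rewrite nth_rcons size_map k_lt (nth_map 0) // subrK.
  apply: in_spanD; last exact: in_spanZ.
  by apply: in_span_nth; rewrite size_rcons size_map ltnS ltnW.
exists bs', (rcons os p); split => // [|g [a ->]]; last exact: in_span_comb.
have -> : f = ps_scale (h p) b + comb bs (fun k => f os`_k).
  apply/funext => q; rewrite -[RHS]/(h p * ((h p)^-1 * h q) + comb bs _ q).
  by rewrite mulrA mulfV // mul1r -[h q]/(f q - comb bs _ q) subrK.
by apply: in_spanD; [exact: in_spanZ|exact: in_span_comb].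
Qed.

Lemma reduced_echelon_span (fs : seq F) : (forall f, f \in fs -> is_puiseux f) ->
  exists bs os, reduced_echelon bs os /\ forall f, f \in fs -> in_span bs f.
Proof.
elim: fs => [|f fs IH] pfs; first by exists [::], [::].
have [|bs [os [echelon_bs fs_in]]] := IH.
  by move=> g g_in; apply: pfs; rewrite inE g_in orbT.
have [bs' [os' [echelon_bs' f_in sub]]] :=
  reduced_echelon_extend echelon_bs (pfs f (mem_head _ _)).
by exists bs', os'; split => // g; rewrite inE => /predU1P[->|/fs_in/sub].
Qed.

Definition echelon_family d (b : 'I_d -> F) (o : 'I_d -> rat) :=
  injective o /\ forall j, is_puiseux (b j) /\ ps_lead (b j) (o j).

Section EchelonFamily.
Variables (d : nat) (b : 'I_d -> F) (o : 'I_d -> rat).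
Hypothesis b_echelon : echelon_family b o.

Lemma echelon_puiseux j : is_puiseux (b j).
Proof. by case: b_echelon => _ /(_ j)[]. Qed.

Lemma echelon_below j r : r < o j -> b j r = 0.
Proof. by case: b_echelon => _ /(_ j)[_ [_]]; apply. Qed.

End EchelonFamily.

Lemma echelon_basis (fs : seq F) : (forall f, f \in fs -> is_puiseux f) ->
  exists d (b : 'I_d -> F) (o : 'I_d -> rat), echelon_family b o /\
    forall f, f \in fs -> exists a : 'I_d -> R, f = \sum_j ps_scale (a j) (b j).
Proof.
move=> /reduced_echelon_span [bs [os [[size_os bsP] fs_in]]].
exists (size bs), (fun j => bs`_j), (fun j => os`_j); split; last first.
  by move=> f /fs_in [a ->]; exists (fun j => a j).
split=> [j j' o_jj'|j].
  apply/val_inj/eqP; have [_ _ b_os] := bsP j (ltn_ord j).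
  have := b_os j' (ltn_ord j'); rewrite -o_jj' b_os // eqxx.
  by case: (_ == _) => // /eqP; rewrite oner_eq0.
have [pb b_below b_os] := bsP j (ltn_ord j).
by rewrite /ps_lead b_os // eqxx oner_neq0.
Qed.

End ReducedEchelon.

Section LexOrder.
Variable m : nat.
Local Notation Pt := ('I_m -> rat).
Implicit Types p q r s : Pt.

Definition ltlex q r :=
  exists i : 'I_m, q i < r i /\ forall j : 'I_m, (j < i)%N -> q j = r j.

Lemma ltlex_irr q : ~ ltlex q q.
Proof. by case=> i []; rewrite ltxx. Qed.

Lemma ltlex_trans q r s : ltlex q r -> ltlex r s -> ltlex q s.
Proof.
move=> [i [qr_i qr_below]] [j [rs_j rs_below]].
case: (ltngtP i j) => [ij|ji|/val_inj ij].
- exists i; split; first by rewrite -(rs_below i ij).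
  by move=> k ki; rewrite qr_below // rs_below // (ltn_trans ki ij).
- exists j; split; first by rewrite (qr_below j ji).
  by move=> k kj; rewrite qr_below ?rs_below // (ltn_trans kj ji).
- subst j; exists i; split; first exact: lt_trans qr_i rs_j.
  by move=> k ki; rewrite qr_below ?rs_below.
Qed.

Lemma ltlex_total q r : q <> r -> ltlex q r \/ ltlex r q.
Proof.
move=> q_neq_r.
have [i0 qr_i0] : exists i, q i != r i.
  apply/not_existsP => none; apply: q_neq_r; apply/funext => i.
  by apply/eqP/negPn/negP; apply: none.
have [i qr_i min_i] := @arg_minnP _ i0 (fun i => q i != r i) val qr_i0.
have below (j : 'I_m) : (j < i)%N -> q j = r j.
  by move=> ji; apply/eqP/negPn/negP => /min_i; rewrite leqNgt ji.
by case: (ltgtP (q i) (r i)) qr_i => // qr _; [left|right]; exists i; split => // j /below.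
Qed.

Lemma ltlexD_pair (I J : eqType) (p : I -> Pt) (p' : J -> Pt) i0 j0 i j :
  (i != i0 -> ltlex (p i0) (p i)) -> (j != j0 -> ltlex (p' j0) (p' j)) ->
  (i, j) != (i0, j0) -> ltlex (p i0 + p' j0) (p i + p' j).
Proof.
have addl s q r : ltlex q r -> ltlex (s + q) (s + r).
  move=> [k [lt_k eq_below]]; exists k; rewrite !fctE /=.
  by split=> [|l /eq_below ->]; rewrite ?ltrD2l.
have addr s q r : ltlex q r -> ltlex (q + s) (r + s).
  by move=> /(addl s); rewrite ![s + _]addrC.
move=> lt_i lt_j; rewrite xpair_eqE.
have [-> /=|/lt_i lt_pi] := eqVneq i i0; first by move=> /lt_j; apply: addl.
have [-> _|/lt_j lt_pj _] := eqVneq j j0; first exact: addr.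
exact: ltlex_trans (addr _ _ _ lt_pi) (addl _ _ _ lt_pj).
Qed.

(* A lex-least [p i0] is found by minimising the number of [P]-points below [p i0]. *)
Lemma ltlex_min (I : finType) (P : pred I) (p : I -> Pt) :
  {in P &, injective p} -> (exists i, P i) ->
  exists2 i0, P i0 & forall i, P i -> i != i0 -> ltlex (p i0) (p i).
Proof.
move=> p_inj [i1 Pi1].
pose below i := [set j | P j & `[< ltlex (p j) (p i) >]].
have [i0 Pi0 min_i0] := arg_minnP (fun i => #|below i|) Pi1.
exists i0 => // i Pi i_neq_i0.
have [//|lt_i_i0] : ltlex (p i0) (p i) \/ ltlex (p i) (p i0).
  by apply: ltlex_total => /p_inj e; rewrite e ?eqxx in i_neq_i0.
have : (#|below i| < #|below i0|)%N.
  apply: proper_card; apply/properP; split.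
    apply/fintype.subsetP => j; rewrite !inE => /andP[-> /asboolP lt_j] /=.
    by apply/asboolP; apply: ltlex_trans lt_j lt_i_i0.
  by exists i; rewrite !inE Pi /=; apply/asboolP => //; apply: ltlex_irr.
by rewrite ltnNge min_i0.
Qed.

Section LexPositive.
Variable R : numDomainType.
Implicit Types G : Pt -> R.

Definition lexpos G := exists p, 0 < G p /\ forall q, ltlex q p -> G q = 0.

Lemma lexpos_lead G p :
  lexpos G -> G p != 0 -> (forall q, ltlex q p -> G q = 0) -> 0 < G p.
Proof.
move=> [q [Gq_gt0 G_below_q]] Gp_neq0 G_below_p.
have [<-//|q_neq_p] := pselect (q = p).
have [qp|pq] := ltlex_total q_neq_p.
  by move: Gq_gt0; rewrite G_below_p // ltxx.
by move: Gp_neq0; rewrite G_below_q ?eqxx.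
Qed.

Lemma lexposN_lead G p : G p < 0 -> (forall q, ltlex q p -> G q = 0) -> lexpos (- G).
Proof.
move=> Gp_lt0 G_below; exists p; rewrite opprfctE /= oppr_gt0; split=> // q /G_below ->.
exact: oppr0.
Qed.

Lemma lexpos0 : ~ lexpos 0.
Proof. by case=> p []; rewrite ltxx. Qed.

Lemma lexposD G G' : lexpos G -> lexpos G' -> lexpos (G + G').
Proof.
move=> [p [Gp G_below]] [p' [Gp' G'_below]]; rewrite /lexpos addrfctE /=.
have [eq_pp'|p_neq_p'] := pselect (p = p').
  subst p'; exists p; split; first exact: addr_gt0.
  by move=> q qp; rewrite G_below // G'_below // addr0.
have [pp'|p'p] := ltlex_total p_neq_p'; [exists p|exists p']; split.
- by rewrite G'_below // addr0.
- by move=> q qp; rewrite G_below // G'_below ?addr0 //; apply: ltlex_trans qp pp'.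
- by rewrite G_below // add0r.
- by move=> q qp'; rewrite G_below ?G'_below ?addr0 //; apply: ltlex_trans qp' p'p.
Qed.

Lemma lexposN G : lexpos G -> ~ lexpos (- G).
Proof.
move=> G_pos [p []]; rewrite opprfctE /= oppr_gt0 => Gp_lt0 G_below.
have G_below' q : ltlex q p -> G q = 0.
  by move=> /G_below /eqP; rewrite oppr_eq0 => /eqP.
have := lexpos_lead G_pos (ltr0_neq0 Gp_lt0) G_below'.
by move/(lt_trans Gp_lt0); rewrite ltxx.
Qed.

Lemma lex_lead_sum (I : finType) (G : I -> Pt -> R) (p : I -> Pt) i0 :
  (forall i q, ltlex q (p i) -> G i q = 0) ->
  (forall i, i != i0 -> G i = 0 \/ ltlex (p i0) (p i)) ->
  (forall q, ltlex q (p i0) -> \sum_i G i q = 0) /\ \sum_i G i (p i0) = G i0 (p i0).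
Proof.
move=> G_below G_min.
have G_off i q : i != i0 -> q = p i0 \/ ltlex q (p i0) -> G i q = 0.
  move=> /G_min[-> //|lt_i0_i] [->|lt_q]; apply: G_below => //.
  exact: ltlex_trans lt_q lt_i0_i.
split=> [q lt_q|].
  apply: big1 => i _; have [->|i_neq_i0] := eqVneq i i0; first exact: G_below.
  exact: G_off i_neq_i0 (or_intror lt_q).
rewrite (bigD1 i0) //= big1 ?addr0 // => i i_neq_i0.
exact: G_off i_neq_i0 (or_introl erefl).
Qed.

End LexPositive.

End LexOrder.

Lemma all_puiseux_upd (R : realType) m (u : 'I_m -> rat -> R) i f :
  all_puiseux u -> is_puiseux f -> all_puiseux (tuple_upd u i f).
Proof. by move=> pu pf j; rewrite /tuple_upd; case: eqP. Qed.

Section Multilinear.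
Variables (R : realType) (m : nat) (W : lmodType R) (phi : ('I_m -> rat -> R) -> W).
Hypothesis phi_ml : multilinear phi.

Lemma multilinear_upd0 u i : all_puiseux u -> phi (tuple_upd u i 0) = 0.
Proof.
move=> pu; have := phi_ml i 1 pu (@puiseux0 R) (@puiseux0 R).
have -> : ps_add (ps_scale 1 0) 0 = 0 :> (rat -> R).
  by apply/funext => q; rewrite /ps_add /ps_scale mulr0 addr0.
set z := phi _; rewrite scale1r => z_eq.
by apply: (@addrI _ z); rewrite addr0 -z_eq.
Qed.

Lemma multilinear_upd_sum (I : Type) (r : seq I) (a : I -> R) (b : I -> rat -> R) u i :
  all_puiseux u -> (forall j, is_puiseux (b j)) ->
  phi (tuple_upd u i (\sum_(j <- r) ps_scale (a j) (b j)))
    = \sum_(j <- r) a j *: phi (tuple_upd u i (b j)).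
Proof.
move=> pu pb; elim: r => [|j r IH]; first by rewrite !big_nil multilinear_upd0.
rewrite !big_cons -IH; apply: phi_ml => //.
by apply: puiseux_sum => k _; apply: puiseuxZ.
Qed.

End Multilinear.

Section TensorCoefficients.
Variables (R : realType) (m : nat).
Implicit Types (u v : 'I_m -> rat -> R) (p q : 'I_m -> rat).

(* The coefficient of [t_1^(q 1) ... t_m^(q m)] in [u 1 (x) ... (x) u m]. *)
Definition tcoef u : ('I_m -> rat) -> R^o := fun q => \prod_i u i (q i).

Lemma tcoef_upd u i f q :
  tcoef (tuple_upd u i f) q = f (q i) * \prod_(j | j != i) u j (q j).
Proof.
rewrite /tcoef (bigD1 i) //= /tuple_upd eqxx; congr (_ * _).
by apply: eq_bigr => j /negPf ->.
Qed.

Lemma tcoef_multilinear : multilinear tcoef.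
Proof.
move=> u i f g a _ _ _; apply/funext => q.
by rewrite scalrfctE addrfctE /= !tcoef_upd /ps_add /ps_scale mulrDl -mulrA.
Qed.

Lemma tcoef_eq0_ltlex u p q :
  (forall i r, r < p i -> u i r = 0) -> ltlex q p -> tcoef u q = 0.
Proof. by move=> u_below [i [lt_i _]]; rewrite /tcoef (bigD1 i) //= u_below ?mul0r. Qed.

Section Product.
Variables (u v : 'I_m -> rat -> R) (p p' : 'I_m -> rat).
Hypotheses (u_below : forall i r, r < p i -> u i r = 0)
  (v_below : forall i r, r < p' i -> v i r = 0).

Lemma tcoef_mul_eq0_ltlex q :
  ltlex q (p + p') -> tcoef (fun i => ps_mul (u i) (v i)) q = 0.
Proof.
apply: tcoef_eq0_ltlex => i r; rewrite -[(p + p') i]/(p i + p' i).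
by apply: ps_mul_below; [apply: u_below|apply: v_below].
Qed.

Lemma tcoef_mul_lead :
  tcoef (fun i => ps_mul (u i) (v i)) (p + p') = tcoef u p * tcoef v p'.
Proof.
rewrite /tcoef -big_split; apply: eq_bigr => i _ /=.
exact: ps_mul_lead (@u_below i) (@v_below i).
Qed.

End Product.

End TensorCoefficients.

Section TensorPower.
Variables (R : realType) (m : nat) (T : comAlgType R) (iota : ('I_m -> rat -> R) -> T).
Hypothesis iota_tensor : is_tensor_power iota.
Local Notation F := (rat -> R).
Local Notation one := (fun _ : 'I_m => ps_one R).
Local Notation mindex d := {ffun 'I_m -> 'I_d}.

Lemma iota_multilinear : multilinear iota.
Proof. by case: iota_tensor. Qed.

Lemma iotaM u v : all_puiseux u -> all_puiseux v ->
  iota (fun i => ps_mul (u i) (v i)) = iota u * iota v.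
Proof. by case: iota_tensor => _ iota_mul _ _; apply: iota_mul. Qed.

Definition slice (u : 'I_m -> F) i := tuple_upd one i (u i).

Lemma iota_prod_slices u : all_puiseux u -> iota u = \prod_i iota (slice u i).
Proof.
move=> pu; have p1 : all_puiseux one by move=> _; apply: puiseux1.
suff prod_r r : uniq r ->
    \prod_(i <- r) iota (slice u i) = iota (fun j => if j \in r then u j else ps_one R).
  rewrite prod_r ?index_enum_uniq //.
  by congr iota; apply/funext => j; rewrite mem_index_enum.
elim: r => [_|i r IH /= /andP[i_notin uniq_r]].
  by rewrite big_nil; have [_ _ -> _] := iota_tensor.
have rest_p : all_puiseux (fun j => if j \in r then u j else ps_one R).
  by move=> j; case: (j \in r); [apply: pu|apply: puiseux1].
rewrite big_cons IH // -iotaM //; last exact: all_puiseux_upd.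
congr iota; apply/funext => j; rewrite inE /slice /tuple_upd.
by case: eqP => [->|_] /=; rewrite ?(negPf i_notin) ?ps_mulr1 ?ps_mul1r.
Qed.

Lemma iota_expand d (b : 'I_d -> F) (a : 'I_m -> 'I_d -> R) u :
  (forall j, is_puiseux (b j)) -> (forall i, u i = \sum_j ps_scale (a i j) (b j)) ->
  iota u = \sum_(J : mindex d) (\prod_i a i (J i)) *: iota (b \o J).
Proof.
move=> pb u_eq.
have pu : all_puiseux u.
  by move=> i; rewrite u_eq; apply: puiseux_sum => j _; apply: puiseuxZ.
have p1 : all_puiseux one by move=> _; apply: puiseux1.
have slice_eq i : iota (slice u i) = \sum_j a i j *: iota (tuple_upd one i (b j)).
  by rewrite /slice u_eq multilinear_upd_sum //; apply: iota_multilinear.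
rewrite iota_prod_slices // (eq_bigr _ (fun i _ => slice_eq i)) bigA_distr_bigA /=.
by apply: eq_bigr => J _; rewrite scaler_prod iota_prod_slices // => i; apply: pb.
Qed.

Definition tensor_span : {pred T} := fun x => `[< exists s : seq (R * ('I_m -> F)),
  (forall cu, cu \in s -> all_puiseux cu.2) /\ x = \sum_(cu <- s) cu.1 *: iota cu.2 >].

Lemma tensor_span_closed : submod_closed tensor_span.
Proof.
split; first by apply/asboolP; exists [::]; rewrite big_nil.
move=> a x y /asboolP[s [ps ->]] /asboolP[s' [ps' ->]]; apply/asboolP.
exists ([seq (a * cu.1, cu.2) | cu <- s] ++ s'); split.
  by move=> cu; rewrite mem_cat => /orP[/mapP[cu' /ps pcu' ->]|/ps'].
rewrite big_cat big_map scaler_sumr; congr (_ + _).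
by apply: eq_bigr => cu _; rewrite scalerA.
Qed.

HB.instance Definition _ := GRing.isSubmodClosed.Build R T tensor_span tensor_span_closed.

Inductive span_elt : predArgType := SpanElt (x : T) of x \in tensor_span.
Definition span_val (x : span_elt) : T := let: SpanElt y _ := x in y.
HB.instance Definition _ := [isSub of span_elt for span_val].
HB.instance Definition _ := [Choice of span_elt by <:].
HB.instance Definition _ := [SubChoice_isSubZmodule of span_elt by <:].
HB.instance Definition _ := [SubZmodule_isSubLmodule of span_elt by <:].

(* Uniqueness in the universal property, applied to [val \o h] and [idfun], where
   [h] corestricts [iota] to the span of its image. *)
Lemma tensor_span_full x : x \in tensor_span.
Proof.
have [_ _ _ univ] := iota_tensor.
have iota_in u : all_puiseux u -> iota u \in tensor_span.
  move=> pu; apply/asboolP; exists [:: (1, u)]; rewrite big_seq1 scale1r.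
  by split => // cu; rewrite inE => /eqP ->.
pose phi u : span_elt := insubd 0 (iota u).
have phi_val u : all_puiseux u -> val (phi u) = iota u.
  by move=> pu; rewrite val_insubd iota_in.
have phi_ml : multilinear phi.
  move=> u i f g a pu pf pg; apply: val_inj.
  have pfg : is_puiseux (ps_add (ps_scale a f) g).
    by apply: puiseuxD => //; apply: puiseuxZ.
  rewrite raddfD /= !phi_val; do ?[exact: all_puiseux_upd].
  exact: iota_multilinear.
have [[h h_iota] _] := univ _ _ phi_ml.
have [_ iota_uniq] := univ _ _ iota_multilinear.
have -> : x = val (h x).
  apply: (iota_uniq idfun (val \o h)) => u pu /=.
  by rewrite h_iota //; apply/esym/phi_val.
exact: valP.
Qed.

Lemma tensor_decomposition x : exists d (b : 'I_d -> F) (o : 'I_d -> rat)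
  (E : mindex d -> R), echelon_family b o /\ x = \sum_J E J *: iota (b \o J).
Proof.
have /asboolP[s [ps ->]] := tensor_span_full x.
pose fs := [seq cu.2 i | cu <- s, i <- enum 'I_m].
have [|d [b [o [b_echelon fs_span]]]] := @echelon_basis _ fs.
  by move=> f /allpairsP[[cu i] [cu_in _ ->]]; apply: ps.
have coords (ci : (R * ('I_m -> F)) * 'I_m) : exists a : 'I_d -> R,
    ci.1 \in s -> ci.1.2 ci.2 = \sum_j ps_scale (a j) (b j).
  case: ci => cu i /=; have [cu_in|_] := boolP (cu \in s); last first.
    by exists (fun _ => 0).
  have [a ->] := fs_span _ (allpairs_f (fun cu i => cu.2 i) cu_in (mem_enum _ i)).
  by exists a.
have [A A_eq] := choice coords.
exists d, b, o, (fun J : mindex d => \sum_(cu <- s) cu.1 * \prod_i A (cu, i) (J i)).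
split => //; transitivity (\sum_(cu <- s) cu.1 *:
  \sum_(J : mindex d) (\prod_i A (cu, i) (J i)) *: iota (b \o J)).
  rewrite big_seq_cond [RHS]big_seq_cond; apply: eq_bigr => cu /andP[cu_in _].
  rewrite -(iota_expand (u := cu.2) (a := fun i => A (cu, i))) // => [j|i].
    exact: echelon_puiseux b_echelon j.
  exact: (A_eq (cu, i)).
under eq_bigr do rewrite scaler_sumr; rewrite exchange_big /=.
by apply: eq_bigr => J _; rewrite scaler_suml; apply: eq_bigr => cu _; rewrite scalerA.
Qed.

End TensorPower.

Lemma sum_scale_eq0 (R : pzRingType) (V : lmodType R) (I : finType)
    (E : I -> R) (v : I -> V) :
  ~ (exists i, E i != 0) -> \sum_i E i *: v i = 0.
Proof.
move=> E0; apply: big1 => i _; have [->|Ei] := eqVneq (E i) 0; first exact: scale0r.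
by case: E0; exists i.
Qed.

Section TensorOrdering.
Variables (R : realType) (m : nat) (T : comAlgType R) (iota : ('I_m -> rat -> R) -> T).
Hypothesis iota_tensor : is_tensor_power iota.
Variable g : {linear T -> ('I_m -> rat) -> R^o}.
Hypothesis g_iota : forall u, all_puiseux u -> g (iota u) = tcoef u.
Local Notation F := (rat -> R).
Local Notation mindex d := {ffun 'I_m -> 'I_d}.

Definition Qm x := lexpos (g x).

Lemma g_decomposition d (b : 'I_d -> F) (E : mindex d -> R) :
  (forall j, is_puiseux (b j)) ->
  g (\sum_J E J *: iota (b \o J)) = fun q => \sum_J E J * tcoef (b \o J) q.
Proof.
move=> pb; apply/funext => q; rewrite linear_sum fct_sumE; apply: eq_bigr => J _.
by rewrite linearZ g_iota // => i; apply: pb.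
Qed.

Lemma echelon_tensor_lead d (b : 'I_d -> F) (o : 'I_d -> rat) (E : mindex d -> R) :
  echelon_family b o -> (exists J, E J != 0) ->
  exists J0, [/\ E J0 * tcoef (b \o J0) (o \o J0) != 0,
    forall J, J != J0 -> E J = 0 \/ ltlex (o \o J0) (o \o J),
    forall q, ltlex q (o \o J0) -> \sum_J E J * tcoef (b \o J) q = 0 &
    \sum_J E J * tcoef (b \o J) (o \o J0) = E J0 * tcoef (b \o J0) (o \o J0)].
Proof.
move=> b_echelon E_neq0; have [o_inj b_lead] := b_echelon.
have oJ_inj : {in [pred J | E J != 0] &, injective (fun J : mindex d => o \o J)}.
  move=> J J' _ _ eq_oJ; apply/ffunP => i; apply: o_inj.
  exact: (congr1 (fun f => f i) eq_oJ).
have [J0 EJ0 J0_min] := ltlex_min oJ_inj E_neq0.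
have J0_min' (J : mindex d) : J != J0 -> E J = 0 \/ ltlex (o \o J0) (o \o J).
  by move=> J_neq; have [|EJ] := eqVneq (E J) 0; [left|right; apply: J0_min].
have G_below (J : mindex d) q : ltlex q (o \o J) -> E J * tcoef (b \o J) q = 0.
  move=> lt_q; rewrite (tcoef_eq0_ltlex _ lt_q) ?mulr0 // => i r.
  by move=> /(echelon_below b_echelon).
have G_min (J : mindex d) :
    J != J0 -> (fun q => E J * tcoef (b \o J) q) = 0 \/ ltlex (o \o J0) (o \o J).
  move=> /J0_min' [EJ|]; [left|by right].
  by apply/funext => q; rewrite EJ mul0r.
have [G_low G_at] := lex_lead_sum G_below G_min.
exists J0; split => //; rewrite mulf_neq0 // prodf_seq_neq0.
by apply/allP => i _ /=; have [_ []] := b_lead (J0 i).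
Qed.

Lemma Qm_lead x d (b : 'I_d -> F) (o : 'I_d -> rat) (E : mindex d -> R) :
  echelon_family b o -> x = \sum_J E J *: iota (b \o J) -> Qm x ->
  exists J0, 0 < E J0 * tcoef (b \o J0) (o \o J0) /\
    forall J, J != J0 -> E J = 0 \/ ltlex (o \o J0) (o \o J).
Proof.
move=> b_echelon x_eq; rewrite /Qm x_eq => Qx.
have [E_neq0|E0] := pselect (exists J, E J != 0); last first.
  by move: Qx; rewrite sum_scale_eq0 // linear0 => /lexpos0.
have [J0 [v_neq0 J0_min G_low G_at]] := echelon_tensor_lead b_echelon E_neq0.
have pb := echelon_puiseux b_echelon.
exists J0; split => //.
move: Qx; rewrite g_decomposition // => /lexpos_lead lead; rewrite -G_at.
by apply: lead; rewrite ?G_at.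
Qed.

Lemma Qm_total x : Qm x \/ x = 0 \/ Qm (- x).
Proof.
have [d [b [o [E [b_echelon ->]]]]] := tensor_decomposition iota_tensor x.
have [E_neq0|E0] := pselect (exists J, E J != 0); last first.
  by right; left; apply: sum_scale_eq0.
have [J0 [v_neq0 _ G_low G_at]] := echelon_tensor_lead b_echelon E_neq0.
have pb := echelon_puiseux b_echelon.
rewrite /Qm linearN g_decomposition //.
case: (ltgtP 0 (E J0 * tcoef (b \o J0) (o \o J0))) v_neq0 => // v_sgn _.
- by left; exists (o \o J0); rewrite G_at.
- by right; right; apply: (lexposN_lead (p := o \o J0)); rewrite ?G_at.
Qed.

Lemma Qm_neq0 x : ~ (Qm x /\ x = 0).
Proof. by case=> Qx x0; move: Qx; rewrite /Qm x0 linear0; apply: lexpos0. Qed.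

Lemma Qm_antisym x : ~ (Qm x /\ Qm (- x)).
Proof. by case=> Qx; rewrite /Qm linearN; apply: lexposN. Qed.

Lemma QmD x y : Qm x -> Qm y -> Qm (x + y).
Proof. by rewrite /Qm linearD; apply: lexposD. Qed.

Lemma g_mul_decomposition d d' (b : 'I_d -> F) (E : mindex d -> R)
    (b' : 'I_d' -> F) (E' : mindex d' -> R) :
  (forall j, is_puiseux (b j)) -> (forall j, is_puiseux (b' j)) ->
  g ((\sum_J E J *: iota (b \o J)) * \sum_K E' K *: iota (b' \o K)) =
  fun q => \sum_(JK : mindex d * mindex d') E JK.1 * E' JK.2 *
    tcoef (fun i => ps_mul (b (JK.1 i)) (b' (JK.2 i))) q.
Proof.
move=> pb pb'; apply/funext => q.
transitivity (\sum_J \sum_K E J * E' K * tcoef (fun i => ps_mul (b (J i)) (b' (K i))) q).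
  rewrite mulr_suml linear_sum fct_sumE; apply: eq_bigr => J _.
  rewrite mulr_sumr linear_sum fct_sumE; apply: eq_bigr => K _.
  rewrite -scalerAl -scalerAr scalerA -iotaM // => [|i|i]; [|exact: pb|exact: pb'].
  rewrite linearZ g_iota // => i; apply: puiseuxM; [exact: pb|exact: pb'].
exact: pair_bigA.
Qed.

Lemma QmM x y : Qm x -> Qm y -> Qm (x * y).
Proof.
have [d [b [o [E [b_echelon x_eq]]]]] := tensor_decomposition iota_tensor x.
have [d' [b' [o' [E' [b'_echelon y_eq]]]]] := tensor_decomposition iota_tensor y.
move=> /(Qm_lead b_echelon x_eq) [J0 [v_gt0 J0_min]].
move=> /(Qm_lead b'_echelon y_eq) [K0 [v'_gt0 K0_min]].
have b_below (J : mindex d) i r : r < (o \o J) i -> b (J i) r = 0.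
  by move=> /(echelon_below b_echelon).
have b'_below (K : mindex d') i r : r < (o' \o K) i -> b' (K i) r = 0.
  by move=> /(echelon_below b'_echelon).
pose G (JK : mindex d * mindex d') q :=
  E JK.1 * E' JK.2 * tcoef (fun i => ps_mul (b (JK.1 i)) (b' (JK.2 i))) q.
pose p (JK : mindex d * mindex d') := (o \o JK.1) + (o' \o JK.2).
have G_below JK q : ltlex q (p JK) -> G JK q = 0.
  by move=> lt_q; rewrite /G (tcoef_mul_eq0_ltlex (b_below JK.1) (b'_below JK.2)) ?mulr0.
have G_min JK : JK != (J0, K0) -> G JK = 0 \/ ltlex (p (J0, K0)) (p JK).
  case: JK => J K JK_neq.
  have [EJ|EJ] := eqVneq (E J) 0.
    by left; apply/funext => q; rewrite /G /= EJ !mul0r.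
  have [EK|EK] := eqVneq (E' K) 0.
    by left; apply/funext => q; rewrite /G /= EK mulr0 mul0r.
  right; apply: (ltlexD_pair (p := fun J : mindex d => o \o J)
    (p' := fun K : mindex d' => o' \o K) _ _ JK_neq).
  - by move=> /J0_min[EJ0|//]; rewrite EJ0 eqxx in EJ.
  - by move=> /K0_min[EK0|//]; rewrite EK0 eqxx in EK.
have [G_low G_at] := lex_lead_sum G_below G_min.
suff G_pos : lexpos (fun q => \sum_JK G JK q).
  rewrite /Qm x_eq y_eq g_mul_decomposition //.
  - exact: echelon_puiseux b_echelon.
  - exact: echelon_puiseux b'_echelon.
exists (p (J0, K0)); rewrite G_at; split => //.
by rewrite /G /= (tcoef_mul_lead (b_below J0) (b'_below K0)) mulrACA mulr_gt0.
Qed.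

Lemma Qm_ordering : is_ordering Qm.
Proof. by split; [exact: Qm_total|exact: Qm_neq0|exact: Qm_antisym|exact: QmD|exact: QmM]. Qed.

Lemma Qm_tensor u : (forall i, is_puiseux (u i) /\ posQ (u i)) -> Qm (iota u).
Proof.
move=> u_pos; have [o o_lead] := choice (fun i => proj2 (u_pos i)).
rewrite /Qm g_iota => [|i]; last exact: (proj1 (u_pos i)).
exists o; split; first by apply: prodr_gt0 => i _; have [] := o_lead i.
by move=> q; apply: tcoef_eq0_ltlex => i; have [_] := o_lead i.
Qed.

End TensorOrdering.

Theorem mainTheorem8 (R : realType) (m : nat) (T : comAlgType R)
  (iota : ('I_m -> rat -> R) -> T) :
  is_tensor_power iota ->
  exists Qm : T -> Prop,
    is_ordering Qm /\
    (forall u : 'I_m -> rat -> R,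
       (forall i, is_puiseux (u i) /\ posQ (u i)) -> Qm (iota u)).
Proof.
move=> iota_tensor; have [_ _ _ univ] := iota_tensor.
have [[g g_iota] _] := univ _ _ (@tcoef_multilinear R m).
exists (Qm g); split; first exact (Qm_ordering iota_tensor g_iota).
exact: Qm_tensor g_iota.
Qed.
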